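(* Let $k$ be a field with $\mathrm{char}(k)\neq 2$, let $n$ be an odd positive integer not divisible by $\mathrm{char}(k)$, and let $\mathcal{G}$ be an abstract theta group of type $(n,\ldots,n)$ over $k$, with $K = \mathcal{G}/\mathbb{G}_m$. Then the coboundary map $\Delta_{\mathcal{G}}: H^1(k,K)\to H^2(k,\mathbb{G}_m) = \mathrm{Br}(k)$ satisfies $\Delta_{\mathcal{G}}(H^1(k,K)) \subset \mathrm{Br}(k)[n]$.
   Context: An abstract theta group over $k$ is an algebraic $k$-group scheme $\mathcal{G}$ in a central extension $1\to\mathbb{G}_m\to\mathcal{G}\to K\to 0$ such that the center of $\mathcal{G}$ is exactly $\mathbb{G}_m$, $K$ is finite étale whose underlying abelian group is of the form $B\oplus B$, and $\mathrm{char}(k)\nmid\#K$; it has type $(n,\ldots,n)$ if $B\cong(\mathbb{Z}/n\mathbb{Z})^g$ for some $g$. *)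

(* Galois-cohomological model of theta groups over k:
   everything is expressed on ks-points with the continuous action of
   Gal(ks/k), ks a separable closure of k. *)
From HB Require Import structures.
From mathcomp Require Import all_boot all_order all_algebra all_field.
Set Implicit Arguments. Unset Strict Implicit. Unset Printing Implicit Defensive.
Import GRing.Theory.
Local Open Scope ring_scope.

Section ThetaGalois.
Variables (k ks : fieldType) (iota : {rmorphism k -> ks}).

Definition separable_closure : Prop :=
  (forall x : ks, exists p : {poly k},
      [/\ p != 0, separable_poly p & root (map_poly iota p) x]) /\
  (forall p : {poly ks}, separable_poly p -> (1 < size p)%N ->
      exists x, root p x).

(* s is an element of the absolute Galois group Gal(ks/k) *)
Definition kaut (s : ks -> ks) : Prop :=
  [/\ {morph s : x y / x + y}, {morph s : x y / x * y}, s 1 = 1,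
      bijective s & forall a, s (iota a) = iota a].

Definition agree (S : seq ks) (s t : ks -> ks) : Prop :=
  forall x, x \in S -> s x = t x.

(* continuity (Krull topology on Gal, discrete target) *)
Definition cont1 (X : Type) (f : (ks -> ks) -> X) : Prop :=
  exists S : seq ks, forall s t, kaut s -> kaut t -> agree S s t -> f s = f t.

(* continuity of a Galois action on a single element: open stabilizer *)
Definition cont_act (X : Type) (act : (ks -> ks) -> X -> X) : Prop :=
  forall x, exists S : seq ks, forall s, kaut s -> agree S s id -> act s x = x.

(* An abstract theta group over k, given by its ks-points
   1 -> ks^* -> G(ks) -> K(ks) -> 0 with compatible continuous
   Gal(ks/k)-actions, centre of G exactly ks^*. *)
Record theta_group := ThetaGroup {
  tK : finZmodType;
  tG : Type;
  gmul : tG -> tG -> tG;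
  gone : tG;
  ginv : tG -> tG;
  gmulA : forall x y z, gmul x (gmul y z) = gmul (gmul x y) z;
  gmul1 : forall x, gmul gone x = x;
  gmulV : forall x, gmul (ginv x) x = gone;
  incl : ks -> tG;
  proj : tG -> tK;
  incl_mul : forall a b, a != 0 -> b != 0 -> incl (a * b) = gmul (incl a) (incl b);
  incl_inj : forall a b, a != 0 -> b != 0 -> incl a = incl b -> a = b;
  proj_mul : forall x y, proj (gmul x y) = proj x + proj y;
  proj_surj : forall u, exists x, proj x = u;
  proj_ker : forall x, proj x = 0 <-> exists2 a, a != 0 & x = incl a;
  center_Gm : forall x, (forall y, gmul x y = gmul y x) <->
                        exists2 a, a != 0 & x = incl a;
  actK : (ks -> ks) -> tK -> tK;
  actK_add : forall s, kaut s -> {morph actK s : u v / u + v};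
  actK_id : forall u, actK id u = u;
  actK_comp : forall s t u, kaut s -> kaut t -> actK (s \o t) u = actK s (actK t u);
  actK_cont : cont_act actK;
  actG : (ks -> ks) -> tG -> tG;
  actG_mul : forall s, kaut s -> {morph actG s : x y / gmul x y};
  actG_id : forall x, actG id x = x;
  actG_comp : forall s t x, kaut s -> kaut t -> actG (s \o t) x = actG s (actG t x);
  actG_cont : cont_act actG;
  actG_incl : forall s a, kaut s -> a != 0 -> actG s (incl a) = incl (s a);
  actG_proj : forall s x, kaut s -> proj (actG s x) = actK s (proj x)
}.

(* type (n,...,n): K(ks) = B (+) B with B = (Z/nZ)^g, i.e. K = (Z/nZ)^(2g) *)
Definition type_nn (T : theta_group) (n : nat) : Prop :=
  exists (g : nat) (e : 'I_(g + g) -> tK T),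
    (forall i, e i *+ n = 0) /\
    bijective (fun c : {ffun 'I_(g + g) -> 'I_n} => \sum_i e i *+ c i).

Definition cocycle1 (T : theta_group) (a : (ks -> ks) -> tK T) : Prop :=
  cont1 a /\ forall s t, kaut s -> kaut t -> a (s \o t) = a s + @actK T s (a t).

(* c : Gal x Gal -> ks^* is the 2-cocycle Delta_G(a) obtained from a
   continuous lift g of the cocycle a:  c(s,t) = g_s . s(g_t) . g_{st}^{-1} *)
Definition coboundary_rep (T : theta_group) (a : (ks -> ks) -> tK T)
    (c : (ks -> ks) -> (ks -> ks) -> ks) : Prop :=
  exists g : (ks -> ks) -> tG T,
    [/\ cont1 g, (forall s, kaut s -> @proj T (g s) = a s) &
        forall s t, kaut s -> kaut t ->
          c s t != 0 /\
          @incl T (c s t) = gmul (gmul (g s) (@actG T s (g t))) (ginv (g (s \o t)))].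

Definition trivial_in_Br (c : (ks -> ks) -> (ks -> ks) -> ks) : Prop :=
  exists b : (ks -> ks) -> ks,
    [/\ cont1 b, (forall s, kaut s -> b s != 0) &
        forall s t, kaut s -> kaut t -> c s t = b s * s (b t) / b (s \o t)].

Definition in_Br_tors (n : nat) (c : (ks -> ks) -> (ks -> ks) -> ks) : Prop :=
  trivial_in_Br (fun s t => c s t ^+ n).

End ThetaGalois.

(* For x in the theta group, x^n lies in G_m because n kills K; write e(x) for
   this scalar.  Commutators are central, so
   (xy)^n = x^n y^n [y,x]^(n(n-1)/2), and [y,x]^n = 1 because y^n is central.
   For odd n, n divides n(n-1)/2, hence e is a Galois-equivariant homomorphism
   to ks^* restricting to a |-> a^n on G_m.  Applying e to the defining
   relation c(s,t) g_st = g_s s(g_t) of the coboundary shows that c^n is the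
   coboundary of s |-> e(g_s). *)

From HB Require Import structures.
From mathcomp Require Import all_boot all_order all_algebra all_field.
From mathcomp Require boolp.
Set Implicit Arguments.
Unset Strict Implicit.
Unset Printing Implicit Defensive.
Import GRing.Theory.
Local Open Scope ring_scope.

Section ClassTwo.
Variable G : groupType.
Implicit Types x y : G.
Local Open Scope group_scope.

Lemma expgC_commg x y n :
  commute [~ y, x] y -> y ^+ n * x = x * y ^+ n * [~ y, x] ^+ n.
Proof.
move=> cwy; rewrite [LHS]conjgC conjXg -mulgA -expgMn; last exact: commute_sym.
by rewrite commgEl mulVKg.
Qed.

Lemma expgMn_class2 x y n : commute [~ y, x] x -> commute [~ y, x] y ->
  (x * y) ^+ n = x ^+ n * y ^+ n * [~ y, x] ^+ 'C(n, 2).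
Proof.
move=> cwx cwy; elim: n => [|n IHn]; first by rewrite !expg0 !mulg1.
set w := [~ y, x].
have wxC k : commute (w ^+ k) x by apply/commute_sym/commuteX.
have wyC k : commute (w ^+ k) y by apply/commute_sym/commuteX.
rewrite expgSr IHn binS bin1 addnC expgnDr -!mulgA.
rewrite (mulgA (w ^+ 'C(n, 2)) x y) wxC -(mulgA x) (mulgA (y ^+ n) x).
rewrite (expgC_commg n cwy) wyC -!mulgA (mulgA (w ^+ n) y) wyC.
by rewrite !mulgA -expgSr -(mulgA _ (y ^+ n) y) -expgSr.
Qed.

Lemma expgMn_odd x y n : odd n -> commute [~ y, x] x -> commute [~ y, x] y ->
  commute (y ^+ n) x -> (x * y) ^+ n = x ^+ n * y ^+ n.
Proof.
move=> n_odd cwx cwy cynx.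
have wn1 : [~ y, x] ^+ n = 1.
  by apply: (@mulgI _ (x * y ^+ n)); rewrite -(expgC_commg n cwy) cynx mulg1.
by rewrite expgMn_class2 // bin2odd // expgnA wn1 expg1n mulg1.
Qed.

End ClassTwo.

Lemma kaut_neq0 (k ks : fieldType) (iota : {rmorphism k -> ks}) s a :
  kaut iota s -> a != 0 -> s a != 0.
Proof.
case=> _ sM s1 _ _ a0; apply: contra_neq (oner_neq0 ks) => sa0.
by rewrite -s1 -(mulfV a0) sM sa0 mul0r.
Qed.

Lemma cont1_comp (k ks : fieldType) (iota : {rmorphism k -> ks}) (X Y : Type)
  (f : (ks -> ks) -> X) (h : X -> Y) : cont1 iota f -> cont1 iota (h \o f).
Proof. by case=> S fS; exists S => s t ks_s ks_t st /=; rewrite (fS s t). Qed.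

Lemma type_nn_torsion (k ks : fieldType) (iota : {rmorphism k -> ks})
  (T : theta_group iota) n : type_nn T n -> forall u : tK T, u *+ n = 0.
Proof.
case=> g [e [en0 [c _ cK]]] u; rewrite -[u]cK.
elim/big_ind: _ => [|v w vn wn|i _]; first by rewrite mul0rn.
  by rewrite mulrnDl vn wn addr0.
by rewrite -mulrnA mulnC mulrnA en0 mul0rn.
Qed.

Section ThetaGroupPoints.
Variables (k ks : fieldType) (iota : {rmorphism k -> ks}) (T : theta_group iota).
Local Notation G := (tG T).
Local Notation mul := (@gmul _ _ _ T).
Local Notation inv := (@ginv _ _ _ T).

Lemma gmulVr : right_inverse (@gone _ _ _ T) inv mul.
Proof.
move=> x; rewrite -[mul x _]gmul1 -(gmulV (inv x)) -gmulA.
by rewrite (gmulA (inv x)) gmulV gmul1.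
Qed.

Lemma gmul1r : right_id (@gone _ _ _ T) mul.
Proof. by move=> x; rewrite -(gmulV x) gmulA gmulVr gmul1. Qed.

HB.instance Definition _ := boolp.gen_eqMixin G.
HB.instance Definition _ := boolp.gen_choiceMixin G.
HB.instance Definition _ := isGroup.Build G
  (@gmulA _ _ _ T) (@gmul1 _ _ _ T) gmul1r (@gmulV _ _ _ T) gmulVr.

Local Notation incl := (@incl _ _ _ T).
Local Notation proj := (@proj _ _ _ T).
Local Notation actG := (@actG _ _ _ T).
Lemma inclM a b : a != 0 -> b != 0 -> incl (a * b) = (incl a * incl b)%g :> G.
Proof. exact: incl_mul. Qed.

Lemma inclI a b : a != 0 -> b != 0 -> incl a = incl b :> G -> a = b.
Proof. exact: incl_inj. Qed.

Lemma projM x y : proj (x * y)%g = proj x + proj y.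
Proof. exact: proj_mul. Qed.

Lemma actGM s : kaut iota s -> {morph actG s : x y / (x * y)%g}.
Proof. exact: actG_mul. Qed.

Lemma incl1 : incl 1 = 1%g :> G.
Proof.
apply: (@mulgI _ (incl 1)); rewrite mulg1.
by rewrite -inclM ?oner_neq0 ?mulr1.
Qed.

Lemma incl_expg a m : a != 0 -> (incl a ^+ m)%g = incl (a ^+ m) :> G.
Proof.
move=> a0; elim: m => [|m IHm]; first by rewrite expr0 incl1.
by rewrite expgSr IHm exprSr inclM ?expf_neq0.
Qed.

Lemma incl_central a x : a != 0 -> commute (incl a) x.
Proof. by move=> a0; apply: (proj2 (center_Gm _)); exists a. Qed.

Lemma proj1g : proj 1%g = 0.
Proof. by apply: (@addrI _ (proj 1%g)); rewrite addr0 -projM mulg1. Qed.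

Lemma projV x : proj x^-1%g = - proj x.
Proof. by apply/eqP; rewrite -addr_eq0 -projM mulVg proj1g. Qed.

Lemma proj_expg x m : proj (x ^+ m)%g = proj x *+ m.
Proof.
by elim: m => [|m IHm]; rewrite ?proj1g // expgSr projM IHm mulrSr.
Qed.

Lemma commg_central (x y z : G) : commute [~ x, y] z.
Proof.
have : proj [~ x, y]%g = 0.
  by rewrite /commg /conjg !projM !projV (addrC (proj x)) addKr addNr.
by case/proj_ker => a a0 ->; apply: incl_central.
Qed.

Lemma actG1 s : kaut iota s -> actG s 1%g = 1%g.
Proof. by move=> ks_s; apply: (@mulgI _ (actG s 1%g)); rewrite -actGM ?mulg1. Qed.

Lemma actG_expg s x m : kaut iota s -> actG s (x ^+ m)%g = (actG s x ^+ m)%g.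
Proof.
move=> ks_s; elim: m => [|m IHm]; first exact: actG1.
by rewrite !expgSr actGM // IHm.
Qed.

Section OddExponent.
Variable n : nat.
Hypotheses (n_odd : odd n) (Kn : forall u : tK T, u *+ n = 0).

Lemma expg_in_Gm (x : G) : exists a, (a != 0) && ((x ^+ n)%g == incl a).
Proof.
have : proj (x ^+ n)%g = 0 by rewrite proj_expg Kn.
by case/proj_ker => a a0 xa; exists a; rewrite a0 xa eqxx.
Qed.

Definition scalar_expg (x : G) : ks := xchoose (expg_in_Gm x).

Lemma scalar_expg_neq0 x : scalar_expg x != 0.
Proof. by have /andP[] := xchooseP (expg_in_Gm x). Qed.

Lemma scalar_expgE (x : G) : (x ^+ n)%g = incl (scalar_expg x).
Proof. by have /andP[_ /eqP] := xchooseP (expg_in_Gm x). Qed.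

Lemma scalar_expgM (x y : G) :
  scalar_expg (x * y)%g = scalar_expg x * scalar_expg y.
Proof.
apply: inclI; rewrite ?mulf_neq0 ?scalar_expg_neq0 //.
rewrite inclM ?scalar_expg_neq0 // -!scalar_expgE.
apply: expgMn_odd => //; try exact: commg_central.
by rewrite scalar_expgE; apply/incl_central/scalar_expg_neq0.
Qed.

Lemma scalar_expg_incl a : a != 0 -> scalar_expg (incl a) = a ^+ n.
Proof.
move=> a0; apply: inclI; rewrite ?expf_neq0 ?scalar_expg_neq0 //.
by rewrite -scalar_expgE incl_expg.
Qed.

Lemma scalar_expg_actG s x :
  kaut iota s -> scalar_expg (actG s x) = s (scalar_expg x).
Proof.
move=> ks_s; apply: inclI; rewrite ?scalar_expg_neq0 //.
  exact: kaut_neq0 ks_s (scalar_expg_neq0 x).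
rewrite -[incl (scalar_expg _)]scalar_expgE -actG_expg // scalar_expgE.
by rewrite actG_incl ?scalar_expg_neq0.
Qed.

End OddExponent.

End ThetaGroupPoints.

Theorem theorem27 (k ks : fieldType) (iota : {rmorphism k -> ks}) (n : nat)
  (Hsep : separable_closure iota)
  (Hchar2 : (2%:R : k) != 0)
  (Hnodd : odd n) (Hnpos : (0 < n)%N) (Hnchar : (n%:R : k) != 0)
  (T : theta_group iota) (HT : type_nn T n) :
  forall (a : (ks -> ks) -> tK T), cocycle1 a ->
  forall c, coboundary_rep a c -> in_Br_tors iota n c.
Proof.
move=> a _ c [g [g_cont _ g_c]].
have Kn := type_nn_torsion HT.
exists (fun s => scalar_expg Kn (g s)); split.
- exact: cont1_comp.
- by move=> s _; apply: scalar_expg_neq0.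
move=> s t ks_s ks_t; have [c0 c_def] := g_c s t ks_s ks_t.
have cE : incl T (c s t) = (g s * actG s (g t) / g (s \o t))%g := c_def.
have : (incl T (c s t) * g (s \o t))%g = (g s * actG s (g t))%g.
  by rewrite cE mulgVK.
move/(congr1 (scalar_expg Kn)).
rewrite !scalar_expgM // (scalar_expg_incl Kn c0) scalar_expg_actG // => e.
by rewrite -e mulfK ?scalar_expg_neq0.
Qed.
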